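(* Let $A \in S(2n,\mathbb{R})$ and $0\le k\le n-1$. For a subset $S\subseteq\{1,\dots,n\}$ with $|S| = k$, let $A_S$ be the $(2n-2k)\times(2n-2k)$ submatrix of $A$ obtained by deleting rows and columns $2i-1$ and $2i$ for all $i\in S$, and set $s_k(A) = \sum_{S\subseteq\{1,\dots,n\},\,|S|=k}\operatorname{Pf}(A_S)$. Then for every $P \in \operatorname{Sp}(2n)$, $s_k(P^T A P) = s_k(A)$.
   Context: $S(2n,\mathbb{R}) = \{A \in M(2n,\mathbb{R}) : A^T = -A,\ \det A\neq 0\}$. $J$ is the $2n\times 2n$ block-diagonal matrix with $n$ diagonal blocks $J_0 = \begin{bmatrix} 0 & 1 \\ -1 & 0\end{bmatrix}$, and $\operatorname{Sp}(2n) = \{P\in M(2n,\mathbb{R}) : P^T J P = J\}$. For a skew-symmetric $2m\times 2m$ matrix $B$, $\operatorname{Pf}(B) = \frac{1}{2^m m!}\sum_{\sigma\in S_{2m}}\operatorname{sgn}(\sigma)\prod_{i=1}^m B_{\sigma(2i-1),\sigma(2i)}$. *)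

From HB Require Import structures.
From mathcomp Require Import all_boot all_order all_algebra all_fingroup.
From mathcomp Require Import reals.
Set Implicit Arguments. Unset Strict Implicit. Unset Printing Implicit Defensive.
Import Order.TTheory GRing.Theory Num.Theory.
Local Open Scope ring_scope.

(* Indices are 0-based: the paper's index 2i-1, 2i (i = 1..n) become
   2i, 2i+1 (i = 0..n-1). *)

Section Defs.
Variable R : realType.

(* Symplectic form J = diag(J0,...,J0), J0 = [[0,1],[-1,0]]. *)
Definition Jmx (n : nat) : 'M[R]_(n.*2) :=
  \matrix_(i, j) if (i./2 == j./2)%N then
                   (if odd i then (if odd j then 0 else -1)
                    else (if odd j then 1 else 0))
                 else 0.

(* Entry of B at natural-number positions (0 out of range). *)
Definition mxn (N : nat) (B : 'M[R]_N) (k l : nat) : R :=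
  match (insub k : option 'I_N), (insub l : option 'I_N) with
  | Some a, Some b => B a b
  | _, _ => 0
  end.

Definition pf_term (N : nat) (B : 'M[R]_N) (s : 'S_N) (i : nat) : R :=
  match (insub i.*2 : option 'I_N), (insub i.*2.+1 : option 'I_N) with
  | Some a, Some b => B (s a) (s b)
  | _, _ => 0
  end.

Definition Pfaff (N : nat) (B : 'M[R]_N) : R :=
  (2 ^+ N./2 * (N./2)`!%:R)^-1 *
  \sum_(s : 'S_N) (-1) ^+ s * \prod_(i < N./2) pf_term B s i.

Definition kept_idx (n : nat) (S : {set 'I_n}) : seq nat :=
  [seq j <- iota 0 n.*2 | ~~ [exists i in S, nat_of_ord i == j./2]].

Definition subA (n : nat) (A : 'M[R]_(n.*2)) (S : {set 'I_n}) :
    'M[R]_(size (kept_idx S)) :=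
  \matrix_(a, b) mxn A (nth 0%N (kept_idx S) a) (nth 0%N (kept_idx S) b).

Definition s_k (n k : nat) (A : 'M[R]_(n.*2)) : R :=
  \sum_(S : {set 'I_n} | #|S| == k) Pfaff (subA A S).

End Defs.

From HB Require Import structures.
From mathcomp Require Import all_boot all_order all_algebra all_fingroup.
From mathcomp Require Import reals.
From mathcomp Require Import zify ring.
Set Implicit Arguments. Unset Strict Implicit. Unset Printing Implicit Defensive.
Import Order.TTheory GRing.Theory Num.Theory.
Local Open Scope ring_scope.

(* Expanding the Pfaffian multilinearly along the 2x2 diagonal blocks of J gives
   Pf(A + tJ) = sum_k t^k s_k(A).  Since Pf(P^T M P) = det P * Pf(M) and
   P^T (A + tJ) P = P^T A P + tJ, comparing coefficients of these polynomials in t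
   yields s_k(P^T A P) = det P * s_k(A) for every k, and s_n = 1 forces det P = 1. *)

Lemma prod_nat_double (R : comRingType) (G : nat -> R) m :
  \prod_(0 <= x < m.*2) G x = \prod_(0 <= i < m) (G i.*2 * G i.*2.+1).
Proof.
elim: m => [|m IHm]; first by rewrite !big_geq.
by rewrite doubleS !big_nat_recr //= IHm mulrA.
Qed.

Section DoubleOrdinals.
Variable m : nat.

Definition dbl_ord (i : 'I_m) : 'I_(m.*2) :=
  Ordinal (etrans (ltn_double i m) (ltn_ord i)).
Definition dblS_ord (i : 'I_m) : 'I_(m.*2) :=
  Ordinal (etrans (ltn_Sdouble i m) (ltn_ord i)).
Definition half_ord (x : 'I_(m.*2)) : 'I_m :=
  Ordinal (etrans (ltn_half_double x m) (ltn_ord x)).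

Lemma half_dbl_ord (i : 'I_m) : half_ord (dbl_ord i) = i.
Proof. by apply: val_inj; rewrite /= doubleK. Qed.

Lemma half_dblS_ord (i : 'I_m) : half_ord (dblS_ord i) = i.
Proof. by apply: val_inj; exact: (half_bit_double i true). Qed.

Lemma dbl_half_ord (x : 'I_(m.*2)) : ~~ odd x -> dbl_ord (half_ord x) = x.
Proof. by move=> ox; apply: val_inj; rewrite /= -{2}(odd_double_half x) (negbTE ox). Qed.

Lemma dblS_half_ord (x : 'I_(m.*2)) : odd x -> dblS_ord (half_ord x) = x.
Proof. by move=> ox; apply: val_inj; rewrite /= -{2}(odd_double_half x) ox. Qed.

Lemma odd_dbl_ord (i : 'I_m) : odd (dbl_ord i) = false.
Proof. exact: odd_double. Qed.

Lemma odd_dblS_ord (i : 'I_m) : odd (dblS_ord i) = true.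
Proof. by rewrite /= odd_double. Qed.

Lemma dbl_ord_inj : injective dbl_ord.
Proof. by move=> i j /(congr1 val) /double_inj /val_inj. Qed.

Lemma dbl_ord_neq_dblS (i j : 'I_m) : dbl_ord i != dblS_ord j.
Proof.
by apply/eqP => /(congr1 (fun x => odd (val x))); rewrite odd_dbl_ord odd_dblS_ord.
Qed.

Definition ffun_pairs (g : {ffun 'I_(m.*2) -> 'I_(m.*2)}) :
    {ffun 'I_m -> 'I_(m.*2) * 'I_(m.*2)} :=
  [ffun i => (g (dbl_ord i), g (dblS_ord i))].

Definition ffun_unpairs (h : {ffun 'I_m -> 'I_(m.*2) * 'I_(m.*2)}) :
    {ffun 'I_(m.*2) -> 'I_(m.*2)} :=
  [ffun x : 'I_(m.*2) => if odd x then (h (half_ord x)).2 else (h (half_ord x)).1].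

Lemma ffun_pairsK : cancel ffun_pairs ffun_unpairs.
Proof.
move=> g; apply/ffunP => x; rewrite !ffunE.
by case: ifP => ox; rewrite /= ?dblS_half_ord ?dbl_half_ord ?ox.
Qed.

Lemma ffun_unpairsK : cancel ffun_unpairs ffun_pairs.
Proof.
move=> h; apply/ffunP => i; rewrite !ffunE half_dbl_ord half_dblS_ord.
by rewrite odd_dbl_ord odd_dblS_ord; case: (h i).
Qed.

Lemma prod_ord_double (R : comRingType) (G : 'I_(m.*2) -> R) :
  \prod_x G x = \prod_(i < m) (G (dbl_ord i) * G (dblS_ord i)).
Proof.
pose G' (x : nat) := if insub x is Some o then G o else 1.
have G'E (x : 'I_(m.*2)) : G x = G' x by rewrite /G' valK.
rewrite (eq_bigr _ (fun x _ => G'E x)) -(big_mkord xpredT G') prod_nat_double.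
by rewrite big_mkord; apply: eq_bigr => i _; rewrite !G'E.
Qed.

End DoubleOrdinals.

Section PfaffSum.
Variables (R : comRingType) (m : nat).
Implicit Types B P : 'M[R]_(m.*2).

Definition pfaff_sum B : R :=
  \sum_(s : 'S_(m.*2)) (-1) ^+ s * \prod_(i < m) B (s (dbl_ord i)) (s (dblS_ord i)).

Lemma prod_congr_pairs B P (s : 'S_(m.*2)) :
  \prod_(i < m) (P^T *m B *m P) (s (dbl_ord i)) (s (dblS_ord i)) =
  \sum_(g : {ffun 'I_(m.*2) -> 'I_(m.*2)})
     \prod_(i < m) B (g (dbl_ord i)) (g (dblS_ord i)) * \prod_x P (g x) (s x).
Proof.
pose F i (kl : 'I_(m.*2) * 'I_(m.*2)) :=
  P kl.1 (s (dbl_ord i)) * B kl.1 kl.2 * P kl.2 (s (dblS_ord i)).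
transitivity (\prod_(i < m) \sum_kl F i kl).
  apply: eq_bigr => i _.
  transitivity (\sum_k \sum_l F i (k, l)); last by rewrite pair_bigA; apply: eq_bigr => -[].
  rewrite mxE /=.
  under eq_bigr do rewrite mxE big_distrl /=.
  rewrite exchange_big /=; apply: eq_bigr => k _.
  by apply: eq_bigr => l _; rewrite mxE.
rewrite bigA_distr_bigA (reindex (@ffun_pairs m)) /=; last first.
  by exists (@ffun_unpairs m) => h _; rewrite ?ffun_pairsK ?ffun_unpairsK.
apply: eq_bigr => g _; rewrite prod_ord_double -big_split /=.
by apply: eq_bigr => i _; rewrite /F !ffunE /=; ring.
Qed.

Lemma sum_ffun_det_rows (w : {ffun 'I_(m.*2) -> 'I_(m.*2)} -> R) P :
  \sum_g w g * \det (\matrix_(x, y) P (g x) y) =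
  \det P * \sum_(s : 'S_(m.*2)) (-1) ^+ s * w (pval s).
Proof.
rewrite (bigID (fun g : {ffun 'I_(m.*2) -> 'I_(m.*2)} => injectiveb g)) /=.
rewrite [X in _ + X]big1 ?addr0 => [|g /injectivePn[x1 [x2 x12 gx12]]]; last first.
  by rewrite (determinant_alternate x12) ?mulr0 // => y; rewrite !mxE gx12.
rewrite (reindex (@pval _)) /=; last first.
  by exists (insubd (1%g : 'S_(m.*2))) => /= g gP; first apply: val_inj; apply: insubdK.
rewrite big_distrr; apply: eq_big => [s | s _]; first by rewrite (valP s).
have -> : \matrix_(x, y) P (pval s x) y = row_perm s P.
  by apply/matrixP => x y; rewrite !mxE pvalE.
by rewrite row_permE det_mulmx det_perm mulrCA mulrA mulrC.
Qed.

Lemma pfaff_sum_congr B P : pfaff_sum (P^T *m B *m P) = \det P * pfaff_sum B.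
Proof.
rewrite /pfaff_sum; under eq_bigr do rewrite prod_congr_pairs big_distrr /=.
rewrite exchange_big /=.
transitivity (\sum_(g : {ffun 'I_(m.*2) -> 'I_(m.*2)})
   \prod_(i < m) B (g (dbl_ord i)) (g (dblS_ord i)) * \det (\matrix_(x, y) P (g x) y)).
  apply: eq_bigr => g _; rewrite /determinant big_distrr /=.
  apply: eq_bigr => s _; rewrite mulrCA; congr (_ * (_ * _)).
  by apply: eq_bigr => x _; rewrite mxE.
rewrite sum_ffun_det_rows; congr (_ * _); apply: eq_bigr => s _.
by congr (_ * _); apply: eq_bigr => i _; rewrite !pvalE.
Qed.

End PfaffSum.

Lemma prod_add_single (R : comRingType) (I : finType) (x e : I -> R) (t : R) :
  (forall i j, i != j -> e i != 0 -> e j = 0) ->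
  \prod_i (x i + t * e i) = \prod_i x i + t * \sum_i e i * \prod_(j | j != i) x j.
Proof.
move=> e_single; have [i ei | e0] := pickP (fun i => e i != 0); last first.
  have {}e0 j : e j = 0 by apply/eqP/negbFE/e0.
  under eq_bigr do rewrite e0 mulr0 addr0.
  by rewrite [\sum_i _]big1 ?mulr0 ?addr0 // => i _; rewrite e0 mul0r.
have ej0 j : j != i -> e j = 0 by rewrite eq_sym => /e_single; apply.
rewrite [LHS](bigD1 i) // [\prod_j x j](bigD1 i) // [\sum_j _](bigD1 i) //=.
rewrite [X in _ = _ + _ * (_ + X)]big1 => [|j /ej0->]; last by rewrite mul0r.
rewrite (eq_bigr x) => [|j /ej0->]; last by rewrite mulr0 addr0.
by rewrite addr0 mulrDl mulrA.
Qed.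

Lemma sum_perm_lift (R : nmodType) n (i j : 'I_n.+1) (P : pred 'S_n.+1)
    (F : 'S_n.+1 -> R) :
  \sum_(s : 'S_n.+1 | (s i == j) && P s) F s =
  \sum_(s : 'S_n | P (lift_perm i j s)) F (lift_perm i j s).
Proof.
rewrite (reindex (lift_perm i j)); last first.
  pose ulsf i (s : 'S_n.+1) k := odflt k (unlift (s i) (s (lift i k))).
  have ulsfK i' (s : 'S_n.+1) k: lift (s i') (ulsf i' s k) = s (lift i' k).
    rewrite /ulsf; have:= neq_lift i' k.
    by rewrite -(can_eq (permK s)) => /unlift_some[] ? ? ->.
  have inj_ulsf: injective (ulsf i _).
    move=> s; apply: can_inj (ulsf (s i) s^-1%g) _ => k'.
    by rewrite {1}/ulsf ulsfK !permK liftK.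
  exists (fun s => perm (inj_ulsf s)) => [s _ | s].
    by apply/permP=> k'; rewrite permE /ulsf lift_perm_lift lift_perm_id liftK.
  move=> /andP[/eqP si0 _]; apply/permP=> k.
  case: (unliftP i k) => [k'|] ->; rewrite ?lift_perm_id //.
  by rewrite lift_perm_lift -si0 permE ulsfK.
by apply: eq_bigl => s; rewrite lift_perm_id eqxx.
Qed.

Lemma prod_neq_lift (R : comRingType) n (i : 'I_n.+1) (F : 'I_n.+1 -> R) :
  \prod_(l | l != i) F l = \prod_(l < n) F (lift i l).
Proof.
rewrite (reindex_omap (lift i) (unlift i)) /=.
  by apply: eq_bigl => l; rewrite liftK eqxx eq_sym neq_lift.
by move=> l; case: unliftP => [k ->|->]; rewrite ?eqxx.
Qed.

Lemma bump_pair_dbl (i l a : nat) : (a == i.*2) || (a == i.*2.+1) ->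
  bump a (bump i.*2 l.*2) = (bump i l).*2.
Proof. by rewrite /bump => /orP[] /eqP ->; case: (leqP i l) => /=; lia. Qed.

Lemma bump_pair_dblS (i l a : nat) : (a == i.*2) || (a == i.*2.+1) ->
  bump a (bump i.*2 l.*2.+1) = (bump i l).*2.+1.
Proof. by rewrite /bump => /orP[] /eqP ->; case: (leqP i l) => /=; lia. Qed.

Section DeletePair.
Variable m : nat.

Definition dbl_ord1 (i : 'I_m.+1) : 'I_(m.*2).+1 :=
  Ordinal (etrans (leq_double i m) (ltn_ord i) : (i.*2 < (m.*2).+1)%N).

Definition skip_pair (i0 : 'I_m.+1) (a : 'I_(m.*2)) : 'I_(m.+1.*2) :=
  lift (dblS_ord i0 : 'I_(m.*2).+2) (lift (dbl_ord1 i0) a).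

Definition del_pair (R : Type) (i0 : 'I_m.+1) (B : 'M[R]_(m.+1.*2)) : 'M[R]_(m.*2) :=
  \matrix_(a, b) B (skip_pair i0 a) (skip_pair i0 b).

Definition Jblock (R : ringType) (i0 : 'I_m.+1) : 'M[R]_(m.+1.*2) :=
  \matrix_(x, y) (((x == dbl_ord i0) && (y == dblS_ord i0))%:R
                  - ((x == dblS_ord i0) && (y == dbl_ord i0))%:R).

End DeletePair.

Section AddJblock.
Variables (R : comRingType) (m : nat).
Implicit Types (B : 'M[R]_(m.+1.*2)) (i j : 'I_m.+1).

Lemma dbl_ord_lift i : dbl_ord i = lift (dblS_ord i : 'I_(m.*2).+2) (dbl_ord1 i).
Proof. by apply: val_inj; rewrite /= /bump ltnn. Qed.

Lemma dblS_ord_lift i : dblS_ord i = lift (dbl_ord i : 'I_(m.*2).+2) (dbl_ord1 i).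
Proof. by apply: val_inj; rewrite /= /bump leqnn. Qed.

Lemma dbl_ord_lift_pair i (a : 'I_(m.*2).+2) (l : 'I_m) :
  (a == dbl_ord i) || (a == dblS_ord i) ->
  dbl_ord (lift i l) = lift a (lift (dbl_ord1 i) (dbl_ord l)).
Proof. by move=> ai; apply: val_inj; rewrite /= bump_pair_dbl. Qed.

Lemma dblS_ord_lift_pair i (a : 'I_(m.*2).+2) (l : 'I_m) :
  (a == dbl_ord i) || (a == dblS_ord i) ->
  dblS_ord (lift i l) = lift a (lift (dbl_ord1 i) (dblS_ord l)).
Proof. by move=> ai; apply: val_inj; rewrite /= bump_pair_dblS. Qed.

Lemma sum_perm_pair i (i0 : 'I_m.+1) (a b : 'I_(m.*2).+2) (F : 'S_(m.*2).+2 -> R) :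
  b = lift a (dbl_ord1 i) ->
  \sum_(s : 'S_(m.*2).+2 | (s a == dblS_ord i0) && (s b == dbl_ord i0)) F s =
  \sum_(s : 'S_(m.*2))
     F (lift_perm a (dblS_ord i0) (lift_perm (dbl_ord1 i) (dbl_ord1 i0) s)).
Proof.
move=> bE; rewrite (sum_perm_lift a (dblS_ord i0) (fun s => s b == dbl_ord i0)) /=.
rewrite (eq_bigl (fun s : 'S_(m.*2).+1 => (s (dbl_ord1 i) == dbl_ord1 i0) && true)) => [|s].
  exact: (sum_perm_lift (dbl_ord1 i) (dbl_ord1 i0) xpredT).
by rewrite bE lift_perm_lift dbl_ord_lift (inj_eq lift_inj) andbT.
Qed.

Lemma sum_perm_pair_prod B i (i0 : 'I_m.+1) (a b : 'I_(m.*2).+2) :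
  (a == dbl_ord i) || (a == dblS_ord i) -> b = lift a (dbl_ord1 i) ->
  \sum_(s : 'S_(m.*2).+2 | (s a == dblS_ord i0) && (s b == dbl_ord i0))
     (-1) ^+ s * \prod_(l | l != i) B (s (dbl_ord l)) (s (dblS_ord l))
  = (-1) ^+ (~~ odd a) * pfaff_sum (del_pair i0 B).
Proof.
move=> ai bE; rewrite (sum_perm_pair _ _ bE) /pfaff_sum big_distrr.
apply: eq_bigr => s _; rewrite !odd_lift_perm odd_dblS_ord !odd_dbl_ord.
rewrite /= mulrA -signr_addb; congr (_ ^+ _ * _).
  by case: (odd a); case: (odd_perm s).
rewrite prod_neq_lift; apply: eq_bigr => l _.
by rewrite mxE (dbl_ord_lift_pair l ai) (dblS_ord_lift_pair l ai) !lift_perm_lift.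
Qed.

(* Only permutations mapping the pair (2i, 2i+1) onto the pair (2i0, 2i0+1) meet the
   block; peeling that pair off with [lift_perm] leaves [pfaff_sum (del_pair i0 B)],
   and both orientations come with sign +1. *)
Lemma sum_Jblock_term B i (i0 : 'I_m.+1) :
  \sum_(s : 'S_(m.*2).+2) (-1) ^+ s *
     (Jblock R i0 (s (dbl_ord i)) (s (dblS_ord i)) *
      \prod_(l | l != i) B (s (dbl_ord l)) (s (dblS_ord l)))
  = 2%:R * pfaff_sum (del_pair i0 B).
Proof.
pose G (s : 'S_(m.*2).+2) :=
  (-1) ^+ s * \prod_(l | l != i) B (s (dbl_ord l)) (s (dblS_ord l)).
transitivity
  (\sum_(s : 'S_(m.*2).+2 | (s (dblS_ord i) == dblS_ord i0) && (s (dbl_ord i) == dbl_ord i0))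
     G s -
   \sum_(s : 'S_(m.*2).+2 | (s (dbl_ord i) == dblS_ord i0) && (s (dblS_ord i) == dbl_ord i0))
     G s).
  rewrite (big_mkcond (fun s : 'S_(m.*2).+2 =>
    (s (dblS_ord i) == dblS_ord i0) && (s (dbl_ord i) == dbl_ord i0))).
  rewrite (big_mkcond (fun s : 'S_(m.*2).+2 =>
    (s (dbl_ord i) == dblS_ord i0) && (s (dblS_ord i) == dbl_ord i0))) -sumrB.
  apply: eq_bigr => s _; rewrite mxE [(s (dblS_ord i) == _) && _]andbC /G.
  by case: (_ && _); case: (_ && _);
    rewrite ?subrr ?subr0 ?sub0r ?mul1r ?mulN1r ?mul0r ?mulr0 ?mulrN.
rewrite /G (sum_perm_pair_prod B i0 _ (dbl_ord_lift i)) ?eqxx ?orbT //.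
rewrite (sum_perm_pair_prod B i0 _ (dblS_ord_lift i)) ?eqxx //.
by rewrite odd_dblS_ord odd_dbl_ord /=; ring.
Qed.

Lemma Jblock_perm_single (s : 'S_(m.*2).+2) (i0 i j : 'I_m.+1) : i != j ->
  Jblock R i0 (s (dbl_ord i)) (s (dblS_ord i)) != 0 ->
  Jblock R i0 (s (dbl_ord j)) (s (dblS_ord j)) = 0.
Proof.
move=> ij nzi; apply/eqP; apply: contraNT ij => nzj.
have hit (k : 'I_m.+1) : Jblock R i0 (s (dbl_ord k)) (s (dblS_ord k)) != 0 ->
    s (dbl_ord k) = dbl_ord i0 /\ s (dblS_ord k) = dblS_ord i0 \/
    s (dbl_ord k) = dblS_ord i0 /\ s (dblS_ord k) = dbl_ord i0.
  rewrite mxE; case: (boolP (_ && _)) => [/andP[/eqP-> /eqP->] _|_]; first by left.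
  case: (boolP (_ && _)) => [/andP[/eqP-> /eqP->] _|_]; first by right.
  by rewrite subrr eqxx.
have dbl_eq : s (dbl_ord i) = s (dbl_ord j) -> i == j.
  by move/perm_inj/(@dbl_ord_inj m.+1) ->.
have dbl_neq : s (dbl_ord i) != s (dblS_ord j).
  by rewrite (inj_eq perm_inj) dbl_ord_neq_dblS.
case: (hit i nzi) (hit j nzj) => [[ei _]|[ei _]] [[ej oj]|[ej oj]];
  by [apply: dbl_eq; rewrite ei ej | move: dbl_neq; rewrite ei oj eqxx].
Qed.

Lemma pfaff_sum_add_Jblock B (i0 : 'I_m.+1) (t : R) :
  pfaff_sum (B + t *: Jblock R i0) =
  pfaff_sum B + t * (m.+1)%:R * 2%:R * pfaff_sum (del_pair i0 B).
Proof.
rewrite [LHS]/pfaff_sum.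
under eq_bigr => s _.
  rewrite (eq_bigr (fun i => B (s (dbl_ord i)) (s (dblS_ord i)) +
                             t * Jblock R i0 (s (dbl_ord i)) (s (dblS_ord i)))); last first.
    by move=> i _; rewrite !mxE.
  rewrite prod_add_single; last exact: Jblock_perm_single.
  rewrite mulrDr mulrCA mulr_sumr.
  over.
rewrite big_split /= -mulr_sumr exchange_big /=; congr (_ + _).
rewrite (eq_bigr _ (fun i _ => sum_Jblock_term B i i0)) sumr_const card_ord.
by rewrite -mulr_natl; ring.
Qed.

End AddJblock.

Section PfaffBlock.
Variable R : realType.

Definition pfaff_norm m : R := 2 ^+ m * m`!%:R.

Lemma pfaff_normS m : pfaff_norm m.+1 = pfaff_norm m * (m.+1)%:R * 2%:R.
Proof. by rewrite /pfaff_norm exprS factS natrM; ring. Qed.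

Lemma pfaff_norm_neq0 m : pfaff_norm m != 0.
Proof. by rewrite mulf_neq0 ?expf_neq0 ?pnatr_eq0 // -lt0n fact_gt0. Qed.

Lemma PfaffE m (B : 'M[R]_(m.*2)) : Pfaff B = (pfaff_norm m)^-1 * pfaff_sum B.
Proof.
rewrite /Pfaff doubleK; congr (_ * _); apply: eq_bigr => s _; congr (_ * _).
apply: eq_bigr => i _; rewrite /pf_term.
by rewrite -[i.*2]/(val (dbl_ord i)) -[i.*2.+1]/(val (dblS_ord i)) !valK.
Qed.

Lemma Pfaff0 (B : 'M[R]_0) : Pfaff B = 1.
Proof.
rewrite /Pfaff /= expr0 mul1r invr1 mul1r (big_pred1 1%g) ?odd_perm1 ?big_ord0 ?mulr1 //.
by move=> s; symmetry; apply/eqP/permP => -[].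
Qed.

Lemma Pfaff_congr m (B P : 'M[R]_(m.*2)) : Pfaff (P^T *m B *m P) = \det P * Pfaff B.
Proof. by rewrite !PfaffE pfaff_sum_congr mulrCA. Qed.

Lemma Pfaff_add_Jblock m (B : 'M[R]_(m.+1.*2)) (i0 : 'I_m.+1) (t : R) :
  Pfaff (B + t *: Jblock R i0) = Pfaff B + t * Pfaff (del_pair i0 B).
Proof.
rewrite !PfaffE pfaff_sum_add_Jblock pfaff_normS.
have := pfaff_norm_neq0 m; move: (pfaff_norm m) => z z0.
by rewrite !invfM; field; rewrite z0 addrC natr1 pnatr_eq0.
Qed.

End PfaffBlock.

Section PfaffSeq.
Variable R : realType.
Implicit Types (f : nat -> nat -> R) (L : seq nat).

Lemma mxnE N (B : 'M[R]_N) i j (lt_i : (i < N)%N) (lt_j : (j < N)%N) :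
  mxn B i j = B (Ordinal lt_i) (Ordinal lt_j).
Proof.
by rewrite /mxn (insubT (fun k => k < N)%N lt_i) (insubT (fun k => k < N)%N lt_j).
Qed.

Lemma Pfaff_mxn_eq N1 N2 (B1 : 'M[R]_N1) (B2 : 'M[R]_N2) : N1 = N2 ->
  (forall i j, (i < N1)%N -> (j < N1)%N -> mxn B1 i j = mxn B2 i j) ->
  Pfaff B1 = Pfaff B2.
Proof.
move=> eN B12; subst N2; congr Pfaff; apply/matrixP => a b.
by have := B12 a b (ltn_ord a) (ltn_ord b); rewrite /mxn !valK.
Qed.

Definition seq_mx f L : 'M[R]_(size L) := \matrix_(a, b) f (nth 0%N L a) (nth 0%N L b).

Lemma mxn_seq_mx f L i j : (i < size L)%N -> (j < size L)%N ->
  mxn (seq_mx f L) i j = f (nth 0%N L i) (nth 0%N L j).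
Proof. by move=> lt_i lt_j; rewrite (mxnE _ lt_i lt_j) mxE. Qed.

Lemma Pfaff_seq_mx_eq f g L :
  {in L &, f =2 g} -> Pfaff (seq_mx f L) = Pfaff (seq_mx g L).
Proof. by move=> fg; congr Pfaff; apply/matrixP => a b; rewrite !mxE fg ?mem_nth. Qed.

Definition skew_delta (p q x y : nat) : R :=
  ((x == p) && (y == q))%:R - ((x == q) && (y == p))%:R.

Lemma nth_cat_pair_bump L1 L2 p q k i : size L1 = k.*2 ->
  nth 0%N (L1 ++ p :: q :: L2) (bump k.*2.+1 (bump k.*2 i)) = nth 0%N (L1 ++ L2) i.
Proof.
move=> sL1; rewrite !nth_cat sL1; case: (leqP k.*2 i) => ki.
  have -> : bump k.*2.+1 (bump k.*2 i) = i.+2 by rewrite /bump; lia.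
  have -> : (i.+2 < k.*2)%N = false by lia.
  by have -> : (i.+2 - k.*2 = (i - k.*2).+2)%N by lia.
have -> : bump k.*2.+1 (bump k.*2 i) = i by rewrite /bump; lia.
by rewrite ki.
Qed.

Lemma Pfaff_seq_add_delta f L1 L2 p q t :
  ~~ odd (size L1) -> ~~ odd (size L2) -> uniq (L1 ++ p :: q :: L2) ->
  Pfaff (seq_mx (fun x y => f x y + t * skew_delta p q x y) (L1 ++ p :: q :: L2)) =
  Pfaff (seq_mx f (L1 ++ p :: q :: L2)) + t * Pfaff (seq_mx f (L1 ++ L2)).
Proof.
move=> even1 even2 uL; set L := L1 ++ _.
pose m := ((size L1 + size L2)./2)%N; pose k := (size L1)./2.
have sL12 : (size L1 + size L2 = m.*2)%N.
  by rewrite -[LHS]odd_double_half oddD (negbTE even1) (negbTE even2).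
have sL : size L = m.+1.*2 by rewrite size_cat /= !addnS sL12.
have sL1 : size L1 = k.*2 by rewrite -[LHS]odd_double_half (negbTE even1).
have lt_k : (k < m.+1)%N by rewrite ltnS -leq_double -sL1 -sL12 leq_addr.
pose i0 : 'I_m.+1 := Ordinal lt_k.
pose B : 'M[R]_(m.+1.*2) := \matrix_(a, b) f (nth 0%N L a) (nth 0%N L b).
have BE g :
    Pfaff (seq_mx g L) = Pfaff (\matrix_(a, b < m.+1.*2) g (nth 0%N L a) (nth 0%N L b)).
  apply: Pfaff_mxn_eq => // i j lt_i lt_j; rewrite mxn_seq_mx //.
  by rewrite -sL in lt_i lt_j *; rewrite (mxnE _ lt_i lt_j) mxE.
have nth_p : nth 0%N L k.*2 = p by rewrite nth_cat sL1 ltnn subnn.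
have nth_q : nth 0%N L k.*2.+1 = q by rewrite nth_cat sL1 ltnNge leqnSn subSn // subnn.
have delta_Jblock (a b : 'I_(m.+1.*2)) :
    skew_delta p q (nth 0%N L a) (nth 0%N L b) = Jblock R i0 a b.
  by rewrite mxE /skew_delta -nth_p -nth_q !nth_uniq ?sL ?ltn_double ?ltn_Sdouble.
rewrite (BE f) (BE (fun x y => f x y + t * skew_delta p q x y)) -/B.
rewrite (_ : \matrix_(a, b) _ = B + t *: Jblock R i0); last first.
  by apply/matrixP => a b; rewrite [LHS]mxE delta_Jblock !mxE.
rewrite Pfaff_add_Jblock; congr (_ + _ * _).
apply: Pfaff_mxn_eq; first by rewrite size_cat sL12.
move=> i j lt_i lt_j; rewrite mxn_seq_mx ?size_cat ?sL12 //.
by rewrite (mxnE _ lt_i lt_j) !mxE /= !(nth_cat_pair_bump _ _ _ _ sL1).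
Qed.

End PfaffSeq.

Section KeptIdx.
Variable n : nat.
Implicit Type S : {set 'I_n}.

Definition kept_half S (x : nat) := ~~ [exists i in S, nat_of_ord i == x].

Lemma kept_idxE S : kept_idx S = [seq j <- iota 0 n.*2 | kept_half S j./2].
Proof. by []. Qed.

Lemma kept_half_ord S (u : 'I_n) : kept_half S u = (u \notin S).
Proof.
congr negb; apply/existsP/idP => [[i /andP[iS /eqP/val_inj <-]] // | uS].
by exists u; rewrite uS eqxx.
Qed.

Lemma kept_half_setU1 S (u : 'I_n) (x : nat) :
  x != u -> kept_half (u |: S) x = kept_half S x.
Proof.
move=> xu; congr negb; apply/existsP/existsP => [[i /andP[]] | [i /andP[iS ix]]].
  rewrite in_setU1 => /orP[/eqP-> /eqP ux | iS ix]; last by exists i; rewrite iS.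
  by rewrite ux eqxx in xu.
by exists i; rewrite in_setU1 iS orbT.
Qed.

Lemma kept_idx_uniq S : uniq (kept_idx S).
Proof. by rewrite filter_uniq // iota_uniq. Qed.

Lemma kept_idx0 : kept_idx (set0 : {set 'I_n}) = iota 0 n.*2.
Proof.
rewrite kept_idxE (eq_filter (a2 := predT)) ?filter_predT // => j.
by apply/negP => /existsP[i]; rewrite in_set0.
Qed.

Lemma kept_idxT : kept_idx [set: 'I_n] = [::].
Proof.
rewrite kept_idxE (eq_in_filter (a2 := pred0)) ?filter_pred0 // => j.
rewrite mem_iota add0n => /andP[_ lt_j].
have lt_j2 : (j./2 < n)%N by lia.
by rewrite (kept_half_ord _ (Ordinal lt_j2)) inE.
Qed.

End KeptIdx.

Lemma even_size_filter_half (P : pred nat) a b :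
  ~~ odd (size [seq j <- iota a.*2 b.*2 | P j./2]).
Proof.
elim: b => [|b IHb] //.
rewrite doubleS -addn2 iotaD filter_cat size_cat oddD (negbTE IHb) /=.
have -> : ((a.*2 + b.*2)./2 = a + b)%N by lia.
have -> : (uphalf (a.*2 + b.*2) = a + b)%N by lia.
by case: (P (a + b)%N).
Qed.

Lemma kept_idx_split n (S : {set 'I_n}) (u : 'I_n) : u \notin S ->
  exists L1 L2, [/\ kept_idx S = L1 ++ u.*2 :: u.*2.+1 :: L2,
                   kept_idx (u |: S) = L1 ++ L2,
                   ~~ odd (size L1) & ~~ odd (size L2)].
Proof.
move=> uS; pose L1 := [seq j <- iota 0 u.*2 | kept_half S j./2].
pose L2 := [seq j <- iota u.+1.*2 (n - u.+1).*2 | kept_half S j./2].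
have n2 : n.*2 = (u.*2 + (2 + (n - u.+1).*2))%N by have := ltn_ord u; lia.
have u2 : (u.*2 + 2 = u.+1.*2)%N by lia.
exists L1, L2; rewrite !kept_idxE n2 !iotaD !filter_cat !add0n u2 /=.
have -> : (u.*2)./2 = u by lia.
have -> : uphalf (u.*2) = u by lia.
rewrite !kept_half_ord uS in_setU1 eqxx /=; split => //.
- congr (_ ++ _); apply: eq_in_filter => j; rewrite mem_iota => /andP[lo hi];
    by rewrite kept_half_setU1 //; apply/eqP; lia.
- exact: (even_size_filter_half _ 0 u).
- exact: even_size_filter_half.
Qed.

Lemma sum_subsets_setD1 (R : nmodType) n (F : {set 'I_n} -> R) (U : {set 'I_n}) u :
  u \in U ->
  \sum_(T : {set 'I_n} | T \subset U) F T =
  \sum_(T : {set 'I_n} | T \subset U :\ u) F T +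
  \sum_(T : {set 'I_n} | T \subset U :\ u) F (u |: T).
Proof.
move=> uU; rewrite (bigID (fun T : {set 'I_n} => u \in T)) /= addrC; congr (_ + _).
  by apply: eq_bigl => T; rewrite subsetD1.
rewrite (reindex_onto (fun T : {set 'I_n} => u |: T) (fun T : {set 'I_n} => T :\ u)) /=;
  last by move=> T /andP[_ uT]; exact: setD1K.
apply: eq_bigl => T; rewrite subsetD1 subUset sub1set uU setU11 /= andbT.
congr (_ && _); have [uT | uT] /= := boolP (u \in T).
  by apply/negbTE/negP => /eqP TE; move: uT; rewrite -TE setD11.
by rewrite setU1K // eqxx.
Qed.

Section PairDeltas.
Variables (R : realType) (n : nat).
Implicit Types S U : {set 'I_n}.

Definition pair_deltas U (x y : nat) : R :=
  \sum_(u in U) skew_delta R u.*2 u.*2.+1 x y.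

Lemma Pfaff_seq_add_deltas (f : nat -> nat -> R) t U S :
  {in U, forall v, v \notin S} ->
  Pfaff (seq_mx (fun x y => f x y + t * pair_deltas U x y) (kept_idx S)) =
  \sum_(T : {set 'I_n} | T \subset U) t ^+ #|T| * Pfaff (seq_mx f (kept_idx (S :|: T))).
Proof.
move: {2}#|U| (erefl #|U|) => k; elim: k U S => [|k IHk] U S cardU US.
  rewrite (cards0_eq cardU) (big_pred1 set0) => [|T]; last by rewrite subset0.
  rewrite setU0 cards0 expr0 mul1r; apply: Pfaff_seq_mx_eq => x y _ _.
  by rewrite /pair_deltas big_set0 mulr0 addr0.
have /card_gt0P[u uU] : (0 < #|U|)%N by rewrite cardU.
have cardUu : #|U :\ u| = k by move: cardU; rewrite (cardsD1 u) uU => -[].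
have [L1 [L2 [SE uSE even1 even2]]] := kept_idx_split (US u uU).
transitivity (Pfaff (seq_mx (fun x y => (f x y + t * pair_deltas (U :\ u) x y)
                  + t * skew_delta R u.*2 u.*2.+1 x y) (kept_idx S))).
  apply: Pfaff_seq_mx_eq => x y _ _; rewrite /pair_deltas (bigD1 u) //=.
  rewrite (eq_bigl (fun v => v \in U :\ u)) => [|v]; last by rewrite in_setD1 andbC.
  by rewrite mulrDr addrA addrAC.
rewrite SE Pfaff_seq_add_delta -?SE -?uSE ?kept_idx_uniq //.
rewrite IHk // => [|v]; last by rewrite in_setD1 => /andP[_ /US].
rewrite IHk // => [|v]; last first.
  by rewrite in_setD1 in_setU1 => /andP[vu vU]; rewrite negb_or vu US.
rewrite (sum_subsets_setD1 _ uU) mulr_sumr; congr (_ + _); apply: eq_bigr => T.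
rewrite subsetD1 => /andP[_ uT].
by rewrite cardsU1 uT exprS -mulrA setUCA setUA.
Qed.

End PairDeltas.

Lemma sum_subsets_by_card (R : comRingType) n (F : {set 'I_n} -> R) (t : R) :
  \sum_(T : {set 'I_n}) t ^+ #|T| * F T =
  \sum_(k < n.+1) t ^+ k * \sum_(T : {set 'I_n} | #|T| == k) F T.
Proof.
have cardT (T : {set 'I_n}) : (#|T| < n.+1)%N.
  by rewrite ltnS; have := max_card T; rewrite card_ord.
rewrite (partition_big (fun T : {set 'I_n} => inord #|T| : 'I_n.+1) xpredT) //=.
apply: eq_bigr => k _; rewrite mulr_sumr; apply: eq_big => T.
  by rewrite -(inj_eq val_inj) /= inordK.
by move=> /eqP <-; rewrite inordK.
Qed.

Lemma coef_eq_of_poly_eq (R : numDomainType) N (a b : nat -> R) :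
  (forall t, \sum_(i < N) t ^+ i * a i = \sum_(i < N) t ^+ i * b i) ->
  forall i, (i < N)%N -> a i = b i.
Proof.
move=> ab i lt_i; pose p := \poly_(j < N) (a j - b j).
suff p0 : p = 0.
  apply/eqP; rewrite -subr_eq0; have := coef_poly N (fun j => a j - b j) i.
  by rewrite lt_i -/p p0 coef0 => <-.
apply: (@roots_geq_poly_eq0 _ p [seq j%:R | j <- iota 0 N]).
- apply/allP => x _; rewrite /root horner_poly.
  under eq_bigr do rewrite mulrBl ![_ * x ^+ _]mulrC.
  by rewrite sumrB ab subrr.
- by rewrite map_inj_uniq ?iota_uniq // => j k /eqP; rewrite eqr_nat => /eqP.
- by rewrite size_map size_iota size_poly.
Qed.

Section SymplecticInvariance.
Variables (R : realType) (n : nat).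
Implicit Types A : 'M[R]_(n.*2).

Lemma Jmx_pair_deltas x y (lt_x : (x < n.*2)%N) (lt_y : (y < n.*2)%N) :
  Jmx R n (Ordinal lt_x) (Ordinal lt_y) = pair_deltas R [set: 'I_n] x y.
Proof.
have lt_x2 : (x./2 < n)%N by lia.
rewrite /pair_deltas (bigD1 (Ordinal lt_x2)) ?inE //=.
rewrite [X in _ + X]big1 => [|u /andP[_ ux]]; last first.
  have /eqP ux2 : (u : nat) != x./2 by [].
  rewrite /skew_delta.
  have -> : (x == u.*2) = false by apply/eqP; lia.
  have -> : (x == u.*2.+1) = false by apply/eqP; lia.
  by rewrite subrr.
rewrite mxE /skew_delta /= addr0.
have -> : (x == (x./2).*2) = ~~ odd x by apply/eqP/idP; lia.
have -> : (x == (x./2).*2.+1) = odd x by apply/eqP/idP; lia.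
have -> : (y == (x./2).*2.+1) = (x./2 == y./2) && odd y by apply/eqP/andP; lia.
have -> : (y == (x./2).*2) = (x./2 == y./2) && ~~ odd y by apply/eqP/andP; lia.
by case: (odd x); case: (odd y); case: (_ == _); rewrite /= ?subrr ?sub0r ?subr0.
Qed.

Lemma Pfaff_add_scaleJ A t :
  Pfaff (A + t *: Jmx R n) = \sum_(k < n.+1) t ^+ k * s_k k A.
Proof.
rewrite -sum_subsets_by_card.
transitivity (Pfaff (seq_mx (fun x y => mxn A x y + t * pair_deltas R [set: 'I_n] x y)
                             (kept_idx (set0 : {set 'I_n})))).
  apply: Pfaff_mxn_eq; first by rewrite kept_idx0 size_iota.
  move=> i j lt_i lt_j; rewrite mxn_seq_mx ?kept_idx0 ?size_iota // !nth_iota // !add0n.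
  by rewrite !(mxnE _ lt_i lt_j) -(Jmx_pair_deltas lt_i lt_j) !mxE.
rewrite Pfaff_seq_add_deltas => [|v _]; last by rewrite in_set0.
by apply: eq_big => [T | T _]; rewrite ?subsetT // set0U.
Qed.

Lemma s_k_n A : s_k n A = 1.
Proof.
rewrite /s_k (big_pred1 [set: 'I_n]) => [|T]; last first.
  rewrite /= eqEcard subsetT cardsT card_ord /= eqn_leq.
  by have := max_card T; rewrite card_ord => ->.
rewrite (Pfaff_mxn_eq (B2 := (1%:M : 'M[R]_0))) ?Pfaff0 ?kept_idxT // => i j.
by rewrite [in X in X -> _]kept_idxT.
Qed.

End SymplecticInvariance.

Theorem theorem2p8 (R : realType) (n k : nat) (A P : 'M[R]_(n.*2)) :
  A^T = - A -> \det A != 0 -> (k < n)%N ->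
  P^T *m Jmx R n *m P = Jmx R n ->
  s_k k (P^T *m A *m P) = s_k k A.
Proof.
move=> _ _ lt_k JP.
have s_k_congr : forall i, (i < n.+1)%N -> s_k i (P^T *m A *m P) = \det P * s_k i A.
  apply: (coef_eq_of_poly_eq (a := fun i => s_k i (P^T *m A *m P))
                             (b := fun i => \det P * s_k i A)) => t.
  under [RHS]eq_bigr do rewrite mulrCA.
  rewrite -mulr_sumr -!Pfaff_add_scaleJ -Pfaff_congr.
  by rewrite mulmxDr mulmxDl -scalemxAr -scalemxAl JP.
have detP : \det P = 1 by have := s_k_congr n (ltnSn n); rewrite !s_k_n mulr1.
by rewrite s_k_congr ?detP ?mul1r // ltnW.
Qed.
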